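(* Let $G_{20}$ be the graph with vertex set $\mathbb{Z}_{18}\cup\{x,y_0,y_1\}$ in which the vertices of $\mathbb{Z}_{18}$ form a clique, $x$ is adjacent to every element of $\mathbb{Z}_{18}$, $y_0$ is adjacent to exactly the even elements of $\mathbb{Z}_{18}$, $y_1$ to exactly the odd elements, and there are no edges among $x,y_0,y_1$. Consider the cyclic sequences $$L_0=(2, 7, 12, 16, 4, 6, 13, 10, y, 8, 9, 17, x, 1, 5, 3, 14, 11, 15),$$ $$L_1=(11, 13, 6, 2, 14, 12, 7, 9, 16, 10, y, 8, 3, 4, 17, x, 1, 15, 5),$$ $$L_2=(5, 16, 13, 14, 17, x, 1, 10, y, 8, 6, 15, 4, 7, 3, 9, 12, 2, 11).$$ For $\gamma\in\mathbb{Z}_{18}$, let the rotation at $\gamma$ be obtained from $L_{\gamma\bmod 3}$ by adding $\gamma$ (mod 18) to each numerical entry, leaving $x$ unchanged and replacing $y$ by $y_{\gamma \bmod 2}$. Then there exist rotations at $x$, $y_0$, $y_1$ such that the resulting rotation system is a triangular embedding of $G_{20}$ in the orientable surface $S_{22}$ of genus $22$.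
   Context: A rotation system on a simple graph assigns to each vertex a cyclic ordering of its neighbors and determines a cellular orientable embedding. An embedding is triangular if every face is a triangle. $S_k$ denotes the orientable surface of genus $k$. *)

From mathcomp Require Import all_boot.
Set Implicit Arguments. Unset Strict Implicit. Unset Printing Implicit Defensive.

(* A rotation system on graph (T, adj) assigns to each vertex v a sequence
   [rot v] listing its neighbours; it is read as a cyclic ordering
   (the successor of u around v is [next (rot v) u], path.v). *)
Definition valid_rotation (T : finType) (adj : rel T) (rot : T -> seq T) : Prop :=
  forall v, uniq (rot v) /\ (forall u, (u \in rot v) = adj v u).

Definition darts (T : finType) (adj : rel T) : {set T * T} :=
  [set d : T * T | adj d.1 d.2].

Definition face_step (T : finType) (rot : T -> seq T) (d : T * T) : T * T :=
  (d.2, next (rot d.2) d.1).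

Definition nfaces (T : finType) (adj : rel T) (rot : T -> seq T) : nat :=
  fcard (face_step rot) (mem (darts adj)).

Definition triangular (T : finType) (adj : rel T) (rot : T -> seq T) : Prop :=
  forall d, d \in darts adj -> order (face_step rot) d = 3.

(* the (cellular, orientable) embedding determined by rot lies in S_g:
   Euler's formula V - E + F = 2 - 2g, with #darts = 2E, written in nat *)
Definition embeds_in_genus (T : finType) (adj : rel T) (rot : T -> seq T) (g : nat)
  : Prop :=
  2 * (#|T| + nfaces adj rot + 2 * g) = #|darts adj| + 4.

(* vertices: inl i = i in Z_18; inr 0 = x, inr 1 = y_0, inr 2 = y_1 *)
Definition V20 : finType := ('I_18 + 'I_3)%type.

Definition vx : V20 := inr (@inord 2 0).
Definition vy (b : nat) : V20 := inr (@inord 2 (1 + b %% 2)).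

Definition adj20 : rel V20 := fun a b =>
  match a, b with
  | inl i, inl j => i != j
  | inl i, inr k => (val k == 0) || (val k == 1 + odd i)
  | inr k, inl i => (val k == 0) || (val k == 1 + odd i)
  | inr _, inr _ => false
  end.

Inductive sym := Num of nat | SX | SY.

Definition L0 : seq sym :=
  [:: Num 2; Num 7; Num 12; Num 16; Num 4; Num 6; Num 13; Num 10; SY; Num 8;
      Num 9; Num 17; SX; Num 1; Num 5; Num 3; Num 14; Num 11; Num 15].
Definition L1 : seq sym :=
  [:: Num 11; Num 13; Num 6; Num 2; Num 14; Num 12; Num 7; Num 9; Num 16; Num 10;
      SY; Num 8; Num 3; Num 4; Num 17; SX; Num 1; Num 15; Num 5].
Definition L2 : seq sym :=
  [:: Num 5; Num 16; Num 13; Num 14; Num 17; SX; Num 1; Num 10; SY; Num 8;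
      Num 6; Num 15; Num 4; Num 7; Num 3; Num 9; Num 12; Num 2; Num 11].

Definition Lsel (r : nat) : seq sym :=
  if r == 0 then L0 else if r == 1 then L1 else L2.

Definition shift_sym (gamma : nat) (s : sym) : V20 :=
  match s with
  | Num k => inl (@inord 17 ((k + gamma) %% 18))
  | SX => vx
  | SY => vy gamma
  end.

Definition rot_num (gamma : 'I_18) : seq V20 :=
  map (shift_sym gamma) (Lsel (gamma %% 3)).

Definition rot20 (rx ry0 ry1 : seq V20) (v : V20) : seq V20 :=
  match v with
  | inl gamma => rot_num gamma
  | inr k => if val k == 0 then rx else if val k == 1 then ry0 else ry1
  end.

From Pilot Require Import Defs.
From mathcomp Require Import all_boot zmodp.

Set Implicit Arguments.
Unset Strict Implicit.
Unset Printing Implicit Defensive.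

(** Take the rotation at [x] to send each neighbour [g] to [g - 1] and the
    rotation at [y_b] to send [g] to [g + 10].  A finite computation shows that
    every face is a triangle.  Since each dart lies on exactly one face,
    [3F = 2E = 378], so [F = 126], and Euler's formula
    [V - E + F = 21 - 189 + 126 = 2 - 2 * 22] gives genus 22. *)

Lemma order_traject (T : finType) (f : T -> T) (x : T) (n : nat) :
  0 < n -> fcycle f (traject f x n) -> uniq (traject f x n) -> order f x = n.
Proof.
case: n => // n _ cyc_p uniq_p.
by rewrite (order_cycle cyc_p uniq_p) ?size_traject // inE eqxx.
Qed.

Section RotationSystem.
Variables (T : finType) (adj : rel T) (rot : T -> seq T).

Lemma face_step_inj : (forall v, uniq (rot v)) -> injective (face_step rot).
Proof.
move=> rot_uniq [u v] [u' v'] [<- eq_next].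
by have := congr1 (prev (rot v)) eq_next; rewrite !prev_next // => ->.
Qed.

Hypotheses (adj_sym : symmetric adj) (rot_valid : valid_rotation adj rot).

Lemma face_step_closed : fclosed (face_step rot) (mem (darts adj)).
Proof.
move=> [u v] _ /eqP <-; rewrite !inE /=.
by rewrite -(rot_valid v).2 mem_next (rot_valid v).2 adj_sym.
Qed.

Lemma nfaces_triangular : triangular adj rot -> nfaces adj rot * 3 = #|darts adj|.
Proof.
move=> tri; apply: fcard_order_set; last exact: face_step_closed.
- exact/face_step_inj/(fun v => (rot_valid v).1).
- by apply/subsetP=> d dart_d; rewrite inE /= tri.
Qed.

End RotationSystem.

Section ExtensionalRotation.
Variables (T : finType) (adj : rel T) (rot rot' : T -> seq T).
Hypothesis eq_rot : rot =1 rot'.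

Lemma eq_face_step : face_step rot =1 face_step rot'.
Proof. by move=> d; rewrite /face_step eq_rot. Qed.

Lemma eq_valid_rotation : valid_rotation adj rot' -> valid_rotation adj rot.
Proof. by move=> valid v; rewrite eq_rot. Qed.

Lemma eq_triangular : triangular adj rot' -> triangular adj rot.
Proof.
move=> tri d dart_d; rewrite -(tri d dart_d); apply: eq_card => d'.
exact: (eq_fconnect eq_face_step).
Qed.

End ExtensionalRotation.

Lemma card_enum_seq (T : finType) (A : pred T) (s : seq T) :
  uniq s -> (forall x, x \in s) -> #|A| = count A s.
Proof.
move=> s_uniq s_complete.
rewrite -size_filter -(card_uniqP (filter_uniq _ s_uniq)).
by apply: eq_card => x; rewrite mem_filter s_complete andbT.
Qed.

Section Enumeration.
Variables (T : finType) (s : seq T).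
Hypothesis s_complete : forall x, x \in s.

Lemma all_enum_seq (P : pred T) : all P s -> forall x, P x.
Proof. by move=> /allP all_P x; apply: all_P. Qed.

Lemma mem_enum_pairs (d : T * T) : d \in [seq (u, v) | u <- s, v <- s].
Proof. by case: d => u v; apply: allpairs_f. Qed.

Hypothesis s_uniq : uniq s.

Lemma card_darts_enum_seq (adj : rel T) :
  #|darts adj| = count (fun d => adj d.1 d.2) [seq (u, v) | u <- s, v <- s].
Proof.
have pairs_uniq : uniq [seq (u, v) | u <- s, v <- s].
  by apply: allpairs_uniq => // -[? ?] [? ?].
rewrite -(card_enum_seq _ pairs_uniq mem_enum_pairs).
by apply: eq_card => d; rewrite inE.
Qed.

End Enumeration.

Definition rot_x : seq V20 := [seq inl (inZp (18 - g)) | g <- iota 0 18].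

Definition rot_y (b : nat) : seq V20 := [seq inl (inZp (b + 10 * k)) | k <- iota 0 9].

(* [inord] does not reduce under [vm_compute] (it goes through the opaque
   [idP]), whereas [inZp] does: the computations are carried out on the
   pointwise equal rotation system [rot_G20]. *)
Definition shift_sym_c (gamma : nat) (s : sym) : V20 :=
  match s with
  | Defs.Num k => inl (inZp (k + gamma))
  | SX => inr (inZp 0)
  | SY => inr (inZp (1 + odd gamma))
  end.

Definition rot_G20 (v : V20) : seq V20 :=
  if v is inl gamma then map (shift_sym_c gamma) (Lsel (gamma %% 3))
  else rot20 rot_x (rot_y 0) (rot_y 1) v.

Definition vertices20 : seq V20 :=
  [seq inl (inZp i) | i <- iota 0 18] ++ [seq inr (inZp k) | k <- iota 0 3].

Lemma rot20_G20 : rot20 rot_x (rot_y 0) (rot_y 1) =1 rot_G20.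
Proof.
case=> // gamma; apply: eq_map; case=> [k||] /=; rewrite /vx /vy;
  [congr inl | congr inr..]; apply: ord_inj => /=.
- by rewrite inordK ?ltn_pmod.
- by rewrite inordK.
- by rewrite modn2 inordK; case: odd.
Qed.

Lemma mem_vertices20 (v : V20) : v \in vertices20.
Proof.
rewrite mem_cat; case: v => i; apply/orP; [left | right]; apply/mapP;
  exists (val i); rewrite ?mem_iota ?ltn_ord //; congr (_ _); apply: ord_inj;
  by rewrite /= modn_small.
Qed.

Lemma vertices20_uniq : uniq vertices20.
Proof. by vm_compute. Qed.

Lemma adj20_sym : symmetric adj20.
Proof. by case=> [i|k] [j|l] //=; rewrite eq_sym. Qed.

Lemma rot_G20_valid : valid_rotation adj20 rot_G20.
Proof.
have checked : all (fun v => uniq (rot_G20 v) &&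
    all (fun u => (u \in rot_G20 v) == adj20 v u) vertices20) vertices20.
  by vm_compute.
move=> v; have /andP[rot_uniq /allP rot_adj] := all_enum_seq mem_vertices20 checked v.
by split=> // u; apply/eqP/rot_adj/mem_vertices20.
Qed.

Lemma rot_G20_triangular : triangular adj20 rot_G20.
Proof.
pose face3 d := traject (face_step rot_G20) d 3.
have checked : all (fun d => adj20 d.1 d.2 ==>
    fcycle (face_step rot_G20) (face3 d) && uniq (face3 d))
  [seq (u, v) | u <- vertices20, v <- vertices20] by vm_compute.
move=> d; rewrite inE => dart_d.
have /(implyP)/(_ dart_d)/andP[face_cycle face_uniq] :=
  all_enum_seq (mem_enum_pairs mem_vertices20) checked d.
exact: order_traject face_cycle face_uniq.
Qed.

Lemma card_darts20 : #|darts adj20| = 378.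
Proof.
by rewrite (card_darts_enum_seq mem_vertices20 vertices20_uniq); vm_compute.
Qed.

Theorem mainTheorem3 :
  exists rx ry0 ry1 : seq V20,
    valid_rotation adj20 (rot20 rx ry0 ry1) /\
    triangular adj20 (rot20 rx ry0 ry1) /\
    embeds_in_genus adj20 (rot20 rx ry0 ry1) 22.
Proof.
exists rot_x, (rot_y 0), (rot_y 1).
have valid := eq_valid_rotation rot20_G20 rot_G20_valid.
have tri := eq_triangular rot20_G20 rot_G20_triangular.
have faces : nfaces adj20 (rot20 rot_x (rot_y 0) (rot_y 1)) = 126.
  apply/eqP; rewrite -(eqn_pmul2r (isT : 0 < 3)).
  by rewrite nfaces_triangular ?card_darts20 //; exact: adj20_sym.
split=> //; split=> //.
by rewrite /embeds_in_genus faces card_darts20 card_sum !card_ord.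
Qed.
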